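(* Let $S\subseteq\{1,\dots,p\}$, let $\rho_\lambda$ be $\mu$-amenable, and suppose $\mathcal L_n$ satisfies the $(\alpha,\tau)$ joint RSC condition. Let $\theta^\ast,\hat\theta\in\mathbb{R}^{p\times q}$ have all rows outside $S$ equal to zero, with $\|\theta^\ast\|_{1,2}\le R$ and $\|\hat\theta\|_{1,2}\le R$. Suppose $\hat\theta$ is a zero-subgradient point of the oracle objective, i.e. there is $\hat z\in\partial\|\hat\theta\|_{1,2}$ such that the rows indexed by $S$ of $\nabla\bar{\mathcal L}_n(\hat\theta)+\lambda\hat z$ vanish. Assume further $\|\nabla\mathcal L_n(\theta^\ast)\|_{\infty,2}\le\lambda/2$, $\lambda\le\alpha_2/(6R)$ and $n\ge\frac{16R^2\tau_2^2}{\alpha_2^2}\log p$. Then $\|\hat\theta-\theta^\ast\|_F\le1$.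
   Context: Notation: for $A\in\mathbb{R}^{p\times q}$, $A_{i:}$ row $i$, $A_{:j}$ column $j$; $\|A\|_{a,b}=(\sum_i\|A_{i:}\|_b^a)^{1/a}$ ($a=\infty$: max over $i$); $\|A\|_F$ Frobenius norm; $\langle A,B\rangle=\mathrm{tr}(A^TB)$. $\mathcal L_n(\theta)=\sum_{j=1}^q[\frac12\theta_{:j}^T\hat\Gamma^{(j)}\theta_{:j}-(\hat\gamma^{(j)})^T\theta_{:j}]$ for given symmetric PSD $\hat\Gamma^{(j)}$ and vectors $\hat\gamma^{(j)}$. Joint RSC: $\langle\nabla\mathcal L_n(\theta+\Delta)-\nabla\mathcal L_n(\theta),\Delta\rangle\ge\alpha_1\|\Delta\|_F^2-\tau_1\frac{\log p}{n}\|\Delta\|_{1,2}^2$ if $\|\Delta\|_F\le1$, and $\ge\alpha_2\|\Delta\|_F-\tau_2\sqrt{\frac{\log p}{n}}\|\Delta\|_{1,2}$ if $\|\Delta\|_F\ge1$. $\mu$-amenable: $\rho_\lambda$ symmetric with $\rho_\lambda(0)=0$, nondecreasing on $\mathbb{R}^+$, $\rho_\lambda(t)/t$ nonincreasing on $\mathbb{R}^+$, differentiable for $t\ne0$, $\rho_\lambda(t)+\frac\mu2t^2$ convex, $\lim_{t\to0^+}\rho'_\lambda(t)=\lambda$. $q_\lambda(t)=\lambda|t|-\rho_\lambda(t)$, $\bar{\mathcal L}_n(\theta)=\mathcal L_n(\theta)-\sum_iq_\lambda(\|\theta_{i:}\|_2)$. Subdifferential: $z\in\partial\|\theta\|_{1,2}$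 iff $z_{i:}=\theta_{i:}/\|\theta_{i:}\|_2$ when $\theta_{i:}\ne0$ and $\|z_{i:}\|_2\le1$ when $\theta_{i:}=0$. *)

From HB Require Import structures.
From mathcomp Require Import all_boot all_order all_algebra.
From mathcomp Require Import all_classical all_reals all_analysis.
Set Implicit Arguments. Unset Strict Implicit. Unset Printing Implicit Defensive.
Import Order.TTheory GRing.Theory Num.Theory.
Import numFieldNormedType.Exports.
Local Open Scope classical_set_scope.
Local Open Scope ring_scope.

Section Defs.
Variable R : realType.

Definition vnorm (q : nat) (v : 'rV[R]_q) : R := Num.sqrt (\sum_j v 0 j ^+ 2).

Definition rnorm (p q : nat) (A : 'M[R]_(p, q)) (i : 'I_p) : R := vnorm (row i A).

Definition norm12 (p q : nat) (A : 'M[R]_(p, q)) : R := \sum_i rnorm A i.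

Definition norminf2 (p q : nat) (A : 'M[R]_(p, q)) : R :=
  \big[Num.max/0]_i rnorm A i.

Definition frob (p q : nat) (A : 'M[R]_(p, q)) : R :=
  Num.sqrt (\sum_i \sum_j A i j ^+ 2).

Definition minner (p q : nat) (A B : 'M[R]_(p, q)) : R := \tr (A^T *m B).

Definition Ln (p q : nat) (Gamma : 'I_q -> 'M[R]_p) (gamma : 'I_q -> 'cV[R]_p)
  (theta : 'M[R]_(p, q)) : R :=
  \sum_j ((2^-1) * ((col j theta)^T *m Gamma j *m col j theta) 0 0
          - ((gamma j)^T *m col j theta) 0 0).

(* gradient of L_n (Gamma^(j) symmetric): column j is Gamma^(j) theta_{:j} - gamma^(j) *)
Definition gradL (p q : nat) (Gamma : 'I_q -> 'M[R]_p) (gamma : 'I_q -> 'cV[R]_p)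
  (theta : 'M[R]_(p, q)) : 'M[R]_(p, q) :=
  \matrix_(i, j) ((Gamma j *m col j theta) i 0 - gamma j i 0).

Definition qlam (lam : R) (rho : R -> R) (t : R) : R := lam * `|t| - rho t.

Definition barLn (p q : nat) (Gamma : 'I_q -> 'M[R]_p) (gamma : 'I_q -> 'cV[R]_p)
  (lam : R) (rho : R -> R) (theta : 'M[R]_(p, q)) : R :=
  Ln Gamma gamma theta - \sum_i qlam lam rho (rnorm theta i).

(* gradient of barL_n: gradL minus the gradient of sum_i q_lambda(||theta_i||),
   whose row i is q_lambda'(||theta_i||) theta_i/||theta_i|| when theta_i <> 0
   (q_lambda'(t) = lambda - rho'(t) for t > 0), and 0 when theta_i = 0
   (q_lambda is differentiable at 0 with derivative 0 for amenable rho). *)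
Definition gradbarL (p q : nat) (Gamma : 'I_q -> 'M[R]_p) (gamma : 'I_q -> 'cV[R]_p)
  (lam : R) (rho : R -> R) (theta : 'M[R]_(p, q)) : 'M[R]_(p, q) :=
  gradL Gamma gamma theta -
  \matrix_(i, j) (if row i theta == 0 then 0
                  else (lam - derive1 rho (rnorm theta i)) * theta i j / rnorm theta i).

Definition subgrad12 (p q : nat) (theta z : 'M[R]_(p, q)) : Prop :=
  forall i : 'I_p,
    (row i theta != 0 -> row i z = (rnorm theta i)^-1 *: row i theta) /\
    (row i theta = 0 -> rnorm z i <= 1).

Definition joint_RSC (p q n : nat) (Gamma : 'I_q -> 'M[R]_p) (gamma : 'I_q -> 'cV[R]_p)
  (alpha1 alpha2 tau1 tau2 : R) : Prop :=
  forall theta Delta : 'M[R]_(p, q),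
    (frob Delta <= 1 ->
       alpha1 * frob Delta ^+ 2 - tau1 * (ln p%:R / n%:R) * norm12 Delta ^+ 2
       <= minner (gradL Gamma gamma (theta + Delta) - gradL Gamma gamma theta) Delta) /\
    (1 <= frob Delta ->
       alpha2 * frob Delta - tau2 * Num.sqrt (ln p%:R / n%:R) * norm12 Delta
       <= minner (gradL Gamma gamma (theta + Delta) - gradL Gamma gamma theta) Delta).

Definition convex_fun (f : R -> R) : Prop :=
  forall x y a : R, 0 <= a -> a <= 1 ->
    f (a * x + (1 - a) * y) <= a * f x + (1 - a) * f y.

Definition amenable (mu lam : R) (rho : R -> R) : Prop :=
  [/\ 0 <= mu,
      (forall t, rho (- t) = rho t),
      rho 0 = 0,
      (forall s t, 0 <= s -> s <= t -> rho s <= rho t) &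
      (forall s t, 0 < s -> s <= t -> rho t / t <= rho s / s)] /\
  [/\ (forall t, t != 0 -> derivable rho t 1),
      convex_fun (fun t => rho t + mu / 2 * t ^+ 2) &
      derive1 rho t @[t --> 0^'+] --> lam].

End Defs.

From HB Require Import structures.
From mathcomp Require Import all_boot all_order all_algebra.
From mathcomp Require Import all_classical all_reals all_analysis.
From mathcomp Require Import ring lra.
Import Order.TTheory GRing.Theory Num.Theory.
Import numFieldNormedType.Exports.
Local Open Scope ring_scope.

(* Let D = theta_hat - theta_star and suppose ||D||_F > 1.  The second branch
   of joint restricted strong curvature gives
     alpha2 ||D||_F - tau2 sqrt(log p / n) ||D||_{1,2}
       <= <grad L_n(theta_hat), D> - <grad L_n(theta_star), D>.
   Both inner products are controlled by duality between ||.||_{oo,2} and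
   ||.||_{1,2}: on the support S the stationarity condition forces every row
   of grad L_n(theta_hat) to have norm at most lambda (this uses
   0 <= rho'(t) <= lambda for an amenable rho), D vanishes off S, and
   ||grad L_n(theta_star)||_{oo,2} <= lambda/2.  With ||D||_{1,2} <= 2R and
   the assumptions on lambda and n the right-hand side is at most alpha2,
   contradicting ||D||_F > 1. *)

Section DerivativeBounds.
Local Open Scope classical_set_scope.
Context {R : realType}.

Lemma derive1_le_quotient (f : R -> R) (t M d : R) :
  derivable f t 1 -> 0 < d ->
  (forall h : R, h != 0 -> `|h| < d -> h^-1 * (f (h + t) - f t) <= M) ->
  derive1 f t <= M.
Proof.
move=> df d0 Hq; rewrite derive1E /derive.
apply: (cvgr_to_le df); near=> h.
have h0 : h != 0 by near: h; exact: nbhs_dnbhs_neq.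
have hd : `|h| < d by near: h; exact: dnbhs0_lt.
by rewrite /= scaler1; exact: Hq.
Unshelve. all: end_near. Qed.

Lemma derive1_ge_quotient (f : R -> R) (t M d : R) :
  derivable f t 1 -> 0 < d ->
  (forall h : R, h != 0 -> `|h| < d -> M <= h^-1 * (f (h + t) - f t)) ->
  M <= derive1 f t.
Proof.
move=> df d0 Hq; rewrite derive1E /derive.
apply: (cvgr_to_ge df); near=> h.
have h0 : h != 0 by near: h; exact: nbhs_dnbhs_neq.
have hd : `|h| < d by near: h; exact: dnbhs0_lt.
by rewrite /= scaler1; exact: Hq.
Unshelve. all: end_near. Qed.

Lemma near_right0_interval (P : R -> Prop) : (\forall x \near 0^'+, P x) ->
  exists2 d : R, 0 < d & forall x, 0 < x -> x < d -> P x.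
Proof.
move=> /nbhs_ballP [d /= d0 Hd]; exists d => // x x0 xd.
by apply: Hd => //; rewrite /ball /= sub0r normrN gtr0_norm.
Qed.

(* Derivative bounds for a mu-amenable regularizer: 0 <= rho'(t) <= lambda
   for every t > 0.  The upper bound chains rho'(t) <= rho(t)/t (since
   rho(t)/t is nonincreasing) with rho(t)/t <= lambda (since rho(t)/t is
   squeezed by the limit lambda of rho' at 0^+). *)
Section Amenable.
Context {mu lam : R} {rho : R -> R}.
Context (amen : amenable mu lam rho).

Lemma amenable_derive_ge0 t : 0 < t -> 0 <= derive1 rho t.
Proof.
move=> t0; have [[_ _ _ mono _] [dr _ _]] := amen.
apply: (@derive1_ge_quotient rho t 0 t (dr t (lt0r_neq0 t0)) t0) => h h0 ht.
case: (ltrgtP h 0) => [hn|hp|he]; last by rewrite he eqxx in h0.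
- rewrite ltr0_norm // in ht.
  apply: mulr_le0; first by rewrite invr_le0 ltW.
  by rewrite subr_le0; apply: mono; lra.
- apply: mulr_ge0; first by rewrite invr_ge0 ltW.
  by rewrite subr_ge0; apply: mono; lra.
Qed.

Lemma amenable_derive_le_ratio t : 0 < t -> derive1 rho t <= rho t / t.
Proof.
move=> t0; have [[_ _ _ _ ratio] [dr _ _]] := amen.
apply: (@derive1_le_quotient rho t (rho t / t) t (dr t (lt0r_neq0 t0)) t0) => h h0 ht.
set r := rho t / t.
have rt : rho t = r * t by rewrite /r divfK ?lt0r_neq0.
case: (ltrgtP h 0) => [hn|hp|he]; last by rewrite he eqxx in h0.
- rewrite ltr0_norm // in ht.
  have := ratio (h + t) t ltac:(lra) ltac:(lra).
  rewrite -/r ler_pdivlMr; last lra.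
  move=> Hr; rewrite -mulrNN -invrN ler_pdivrMl ?oppr_gt0 // rt; nra.
- have := ratio t (h + t) t0 ltac:(lra).
  rewrite -/r ler_pdivrMr; last lra.
  by move=> Hr; rewrite ler_pdivrMl // rt; nra.
Qed.

(* Mean value theorem on [s/2, s] plus the convexity of rho + mu/2 t^2
   (which bounds rho(s/2) above by rho(s)/2 + mu s^2/8). *)
Lemma amenable_chord_bound s M : 0 < s ->
  (forall x, s / 2 < x -> x < s -> derive1 rho x <= M) ->
  rho s <= M * s + mu / 4 * s ^+ 2.
Proof.
move=> s0 dM; have [[mu0 _ rho0 _ _] [dr cvx _]] := amen.
have hd x : x \in `]s / 2, s[%R -> is_derive x 1 rho (derive1 rho x).
  rewrite in_itv /= => /andP[x1 x2].
  by rewrite derive1E; apply: derivableP; apply: dr; apply: lt0r_neq0; lra.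
have hc : {within `[s / 2, s]%classic, continuous rho}.
  apply: derivable_within_continuous => x; rewrite in_itv /= => /andP[x1 x2].
  by apply: dr; apply: lt0r_neq0; lra.
have [c cI Hc] := MVT (ltac:(lra) : s / 2 < s) hd hc.
move: cI; rewrite in_itv /= => /andP[c1 c2].
have mid := cvx s 0 (1 / 2) ltac:(lra) ltac:(lra).
rewrite mulr0 addr0 rho0 add0r expr0n /= !mulr0 addr0 mul1r [_ * s]mulrC in mid.
have slope : derive1 rho c * (s - s / 2) <= M * (s - s / 2).
  by apply: ler_wpM2r; [lra | exact: dM].
rewrite expr2 in mid *; nra.
Qed.

Lemma amenable_ratio_le t : 0 < t -> rho t / t <= lam.
Proof.
move=> t0; have [[mu0 _ _ _ ratio] [_ _ lim]] := amen.
apply/ler_addgt0Pr => e e0.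
have [d d0 near_lam] :=
  @near_right0_interval (fun x => derive1 rho x <= lam + e / 2) (@cvgr_le _ _ _ _ _ _ lim (lam + e / 2) ltac:(lra)).
set s := Num.min t (Num.min (d / 2) (2 * e / (mu + 1))).
have s0 : 0 < s.
  rewrite /s !lt_min t0 /=; apply/andP; split; first lra.
  by apply: divr_gt0; lra.
have st : s <= t by rewrite /s ge_min lexx.
have sd : s < d.
  apply: (le_lt_trans (y := d / 2)); last lra.
  by rewrite /s !ge_min lexx orbT.
have smu : mu * s <= 2 * e.
  have : s <= 2 * e / (mu + 1) by rewrite /s !ge_min lexx !orbT.
  by rewrite ler_pdivlMr; nra.
have chord := @amenable_chord_bound s (lam + e / 2) s0
  (fun x x1 x2 => near_lam x ltac:(lra) ltac:(lra)).
apply: (le_trans (ratio s t s0 st)); rewrite ler_pdivrMr //.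
rewrite expr2 in chord; nra.
Qed.

Lemma amenable_derive_le t : 0 < t -> derive1 rho t <= lam.
Proof.
by move=> t0; exact: le_trans (amenable_derive_le_ratio _ t0) (amenable_ratio_le _ t0).
Qed.

Lemma amenable_lam_ge0 : 0 <= lam.
Proof. exact: le_trans (amenable_derive_ge0 _ ltr01) (amenable_derive_le _ ltr01). Qed.

End Amenable.
End DerivativeBounds.

Section RowNorms.
Context {R : realType} {p q : nat}.

Definition dotv (a b : 'I_q -> R) : R := \sum_j a j * b j.
Definition sqv (a : 'I_q -> R) : R := \sum_j a j ^+ 2.

Lemma sqv_ge0 (a : 'I_q -> R) : 0 <= sqv a.
Proof. by apply: sumr_ge0 => j _; apply: sqr_ge0. Qed.

(* Cauchy-Schwarz in squared form, from Lagrange's identity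
   sum_{i,j} (a_i b_j - a_j b_i)^2 = 2 (|a|^2 |b|^2 - <a,b>^2). *)
Lemma dotv_sqr_le (a b : 'I_q -> R) : dotv a b ^+ 2 <= sqv a * sqv b.
Proof.
have lagrange : \sum_i \sum_j (a i * b j - a j * b i) ^+ 2 =
                2 * (sqv a * sqv b - dotv a b ^+ 2).
  transitivity (\sum_i \sum_j (a i ^+ 2 * b j ^+ 2 + a j ^+ 2 * b i ^+ 2
                               - 2 * ((a i * b i) * (a j * b j)))).
    by apply: eq_bigr => i _; apply: eq_bigr => j _; ring.
  rewrite /sqv /dotv expr2 !mulr_suml.
  under eq_bigr => i _ do rewrite !sumrB !big_split /=.
  rewrite !sumrB !big_split /=.
  have swap : \sum_i \sum_j a j ^+ 2 * b i ^+ 2 = \sum_i \sum_j a i ^+ 2 * b j ^+ 2.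
    by rewrite exchange_big.
  have factor2 : \sum_i \sum_j 2 * (a i * b i * (a j * b j)) =
                 2 * \sum_i \sum_j (a i * b i * (a j * b j)).
    by rewrite mulr_sumr; apply: eq_bigr => i _; rewrite mulr_sumr.
  rewrite swap factor2.
  under [X in _ = 2 * (X - _)]eq_bigr => i _ do rewrite mulr_sumr.
  under [X in _ = 2 * (_ - X)]eq_bigr => i _ do rewrite mulr_sumr.
  ring.
have : 0 <= \sum_i \sum_j (a i * b j - a j * b i) ^+ 2.
  by apply: sumr_ge0 => i _; apply: sumr_ge0 => j _; apply: sqr_ge0.
rewrite lagrange; lra.
Qed.

Lemma cauchy_schwarz (a b : 'I_q -> R) :
  `|dotv a b| <= Num.sqrt (sqv a) * Num.sqrt (sqv b).
Proof.
rewrite -sqrtrM ?sqv_ge0 // -sqrtr_sqr.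
by rewrite ler_sqrt ?dotv_sqr_le // mulr_ge0 ?sqv_ge0.
Qed.

Lemma rnormE (A : 'M[R]_(p, q)) i : rnorm A i = Num.sqrt (sqv (A i)).
Proof. by rewrite /rnorm /vnorm /sqv; congr Num.sqrt; apply: eq_bigr => j _; rewrite mxE. Qed.

Lemma rnorm_ge0 (A : 'M[R]_(p, q)) i : 0 <= rnorm A i.
Proof. by rewrite rnormE sqrtr_ge0. Qed.

Lemma rnorm_sqr (A : 'M[R]_(p, q)) i : sqv (A i) = rnorm A i ^+ 2.
Proof. by rewrite rnormE sqr_sqrtr ?sqv_ge0. Qed.

Lemma row_dot_le (A B : 'M[R]_(p, q)) i :
  `|dotv (A i) (B i)| <= rnorm A i * rnorm B i.
Proof. by rewrite !rnormE; apply: cauchy_schwarz. Qed.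

Lemma rnormB (A B : 'M[R]_(p, q)) i : rnorm (A - B) i <= rnorm A i + rnorm B i.
Proof.
have expand : sqv ((A - B) i) = sqv (A i) - 2 * dotv (A i) (B i) + sqv (B i).
  rewrite /sqv /dotv mulr_sumr -sumrB -big_split /=.
  by apply: eq_bigr => j _; rewrite !mxE; ring.
have cs := row_dot_le A B i.
have := ler_norm (- dotv (A i) (B i)); rewrite normrN => cs'.
have ha := rnorm_ge0 A i; have hb := rnorm_ge0 B i.
rewrite rnormE expand !rnorm_sqr -(ger0_norm (addr_ge0 ha hb)) -sqrtr_sqr.
rewrite ler_sqrt ?sqr_ge0 // sqrrD; lra.
Qed.

Lemma rnorm_eq0 (A : 'M[R]_(p, q)) i : rnorm A i = 0 -> row i A = 0.
Proof.
rewrite rnormE => /eqP; rewrite sqrtr_eq0 => Hle.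
have H0 : sqv (A i) = 0 by apply/eqP; rewrite eq_le Hle sqv_ge0.
apply/rowP => j; rewrite !mxE.
have := psumr_eq0P (P := predT) (fun j _ => sqr_ge0 (A i j)) H0 (i := j) isT.
by move/eqP; rewrite sqrf_eq0 => /eqP.
Qed.

Lemma norm12_ge0 (A : 'M[R]_(p, q)) : 0 <= norm12 A.
Proof. by apply: sumr_ge0 => i _; apply: rnorm_ge0. Qed.

Lemma norm12B (A B : 'M[R]_(p, q)) : norm12 (A - B) <= norm12 A + norm12 B.
Proof. by rewrite /norm12 -big_split /=; apply: ler_sum => i _; exact: rnormB. Qed.

Lemma minnerE (A B : 'M[R]_(p, q)) : minner A B = \sum_i dotv (A i) (B i).
Proof.
rewrite /minner /mxtrace /dotv.
under eq_bigr => k _ do rewrite mxE.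
by rewrite exchange_big /=; apply: eq_bigr => i _; apply: eq_bigr => k _; rewrite mxE.
Qed.

Lemma minnerB (A B D : 'M[R]_(p, q)) : minner (A - B) D = minner A D - minner B D.
Proof.
rewrite !minnerE -sumrB; apply: eq_bigr => i _.
by rewrite /dotv -sumrB; apply: eq_bigr => j _; rewrite !mxE mulrDl mulNr.
Qed.

Lemma minner_le_norm12 (A D : 'M[R]_(p, q)) (c : R) :
  (forall i, `|dotv (A i) (D i)| <= c * rnorm D i) ->
  `|minner A D| <= c * norm12 D.
Proof.
move=> row_bound; rewrite minnerE /norm12 mulr_sumr.
by apply: le_trans (ler_norm_sum _ _ _) _; apply: ler_sum => i _.
Qed.

Lemma minner_le_norminf2 (A D : 'M[R]_(p, q)) :
  `|minner A D| <= norminf2 A * norm12 D.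
Proof.
apply: minner_le_norm12 => i; apply: le_trans (row_dot_le A D i) _.
by apply: ler_wpM2r; [exact: rnorm_ge0 | exact: le_bigmax].
Qed.

Lemma row_dot_scaled_le (A Z D : 'M[R]_(p, q)) i (c lam : R) :
  (forall j, A i j = c * Z i j) -> `|c| * rnorm Z i <= lam ->
  `|dotv (A i) (D i)| <= lam * rnorm D i.
Proof.
move=> HA Hc.
have -> : dotv (A i) (D i) = c * dotv (Z i) (D i).
  by rewrite /dotv mulr_sumr; apply: eq_bigr => j _; rewrite HA mulrA.
rewrite normrM; apply: le_trans (ler_wpM2l (normr_ge0 c) (row_dot_le Z D i)) _.
by rewrite mulrA; apply: ler_wpM2r => //; exact: rnorm_ge0.
Qed.

End RowNorms.

Section OracleGradient.
Context {R : realType} {p q : nat}.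
Context (Gamma : 'I_q -> 'M[R]_p) (gamma : 'I_q -> 'cV[R]_p).
Context {mu lam : R} {rho : R -> R} (amen : amenable mu lam rho).
Context {theta z : 'M[R]_(p, q)} (sg : subgrad12 theta z).

(* On a row where the oracle stationarity condition holds, the gradient row
   of L_n is -lam z_i if theta_i = 0 and -rho'(||theta_i||) theta_i/||theta_i||
   otherwise; both have Euclidean norm at most lam. *)
Lemma stationary_row_dot_le i (D : 'M[R]_(p, q)) :
  row i (gradbarL Gamma gamma lam rho theta + lam *: z) = 0 ->
  `|dotv (gradL Gamma gamma theta i) (D i)| <= lam * rnorm D i.
Proof.
set G := gradL Gamma gamma theta => stat.
have lam0 := amenable_lam_ge0 amen.
have entry j : G i j - (if row i theta == 0 then 0
      else (lam - derive1 rho (rnorm theta i)) * theta i j / rnorm theta i)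
    + lam * z i j = 0.
  have := congr1 (fun M : 'M[R]_(1, q) => M 0 j) stat.
  have entryE (F : 'I_p -> 'I_q -> R) :
      (G - \matrix_(i, j) F i j + lam *: z) i j = G i j - F i j + lam * z i j.
    by rewrite !mxE.
  by rewrite /= mxE /gradbarL -/G entryE [RHS]mxE.
case: (eqVneq (row i theta) 0) => theta_i.
  apply: (@row_dot_scaled_le _ _ _ _ z D i (- lam) lam).
    by move=> j; have := entry j; rewrite theta_i eqxx subr0; lra.
  by rewrite normrN ger0_norm // -[X in _ <= X]mulr1 ler_wpM2l // (sg i).2.
set r := rnorm theta i.
have r0 : 0 < r.
  rewrite lt_neqAle rnorm_ge0 andbT; apply/eqP => r0.
  by move: theta_i; rewrite (rnorm_eq0 _ _ (esym r0)) eqxx.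
have zj j : z i j = r^-1 * theta i j.
  by have := congr1 (fun M : 'M[R]_(1, q) => M 0 j) ((sg i).1 theta_i); rewrite !mxE.
have d0 := amenable_derive_ge0 amen _ r0; have d1 := amenable_derive_le amen _ r0.
apply: (@row_dot_scaled_le _ _ _ _ theta D i (- (derive1 rho r / r)) lam).
  by move=> j; have := entry j; rewrite (negbTE theta_i) zj -/r; lra.
rewrite normrN ger0_norm ?divr_ge0 ?(ltW r0) // divfK ?lt0r_neq0 //.
Qed.

(* Summing over rows: on the support S the stationarity bound applies, off S
   the direction D vanishes. *)
Lemma stationary_inner_le (S : {set 'I_p}) (D : 'M[R]_(p, q)) :
  (forall i, i \in S -> row i (gradbarL Gamma gamma lam rho theta + lam *: z) = 0) ->
  (forall i, i \notin S -> row i D = 0) ->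
  `|minner (gradL Gamma gamma theta) D| <= lam * norm12 D.
Proof.
move=> stat suppD; apply: minner_le_norm12 => i.
have [iS|iNS] := boolP (i \in S); first exact: stationary_row_dot_le (stat i iS).
have Di j : D i j = 0.
  by have := congr1 (fun M : 'M[R]_(1, q) => M 0 j) (suppD i iNS); rewrite !mxE.
rewrite /dotv big1 ?normr0 => [|j _]; last by rewrite Di mulr0.
by rewrite mulr_ge0 ?(amenable_lam_ge0 amen) ?rnorm_ge0.
Qed.

End OracleGradient.

Section ScalarBounds.
Context {R : realType}.

Lemma lam_rad_le {lam alpha Rad : R} : 0 < alpha -> 0 <= Rad ->
  lam <= alpha / (6 * Rad) -> lam * Rad <= alpha / 6.
Proof.
move=> alpha0 Rad0; have [->|RadN0] := eqVneq Rad 0; first by rewrite mulr0; lra.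
have RadP : 0 < Rad by rewrite lt_neqAle eq_sym RadN0 Rad0.
by rewrite ler_pdivlMr; lra.
Qed.

Lemma sample_size_le {tau alpha Rad L N : R} :
  0 <= tau -> 0 < alpha -> 0 <= Rad -> 0 <= L -> 0 <= N ->
  16 * Rad ^+ 2 * tau ^+ 2 / alpha ^+ 2 * L <= N ->
  tau * Num.sqrt (L / N) * Rad <= alpha / 4.
Proof.
move=> tau0 alpha0 Rad0 L0 N0 N_large.
set s := Num.sqrt (L / N).
have s0 : 0 <= s := sqrtr_ge0 _.
have [N_eq0|NN0] := eqVneq N 0.
  have -> : s = 0 by rewrite /s N_eq0 invr0 mulr0 sqrtr0.
  by rewrite mulr0 mul0r; lra.
have NP : 0 < N by rewrite lt_neqAle eq_sym NN0 N0.
have s_sqr : s ^+ 2 = L / N by rewrite sqr_sqrtr // divr_ge0.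
have alpha2P : 0 < alpha ^+ 2 by rewrite exprn_gt0.
move: N_large; rewrite mulrAC ler_pdivrMr // => N_large.
have : tau ^+ 2 * Rad ^+ 2 * (L / N) <= alpha ^+ 2 / 16.
  by rewrite mulrA ler_pdivrMr //; nra.
rewrite -s_sqr => sq_le.
have : (tau * s * Rad) ^+ 2 <= (alpha / 4) ^+ 2 by rewrite !exprMn; lra.
by rewrite ler_sqr ?nnegrE ?mulr_ge0 //; lra.
Qed.

Lemma ln_natr_ge0 (p : nat) : 0 <= ln (p%:R : R).
Proof.
have [->|p0] := eqVneq p 0%N; first by rewrite ln0.
by apply: ln_ge0; rewrite ler1n lt0n p0.
Qed.

End ScalarBounds.

Theorem lemma8 (R : realType) (p q n : nat)
  (Gamma : 'I_q -> 'M[R]_p) (gamma : 'I_q -> 'cV[R]_p)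
  (S : {set 'I_p}) (mu lam : R) (rho : R -> R)
  (alpha1 alpha2 tau1 tau2 Rad : R)
  (theta_star theta_hat z_hat : 'M[R]_(p, q)) :
  (forall j, (Gamma j)^T = Gamma j) ->
  (forall j (v : 'cV[R]_p), 0 <= (v^T *m Gamma j *m v) 0 0) ->
  0 < alpha1 -> 0 < alpha2 -> 0 <= tau1 -> 0 <= tau2 ->
  amenable mu lam rho ->
  joint_RSC n Gamma gamma alpha1 alpha2 tau1 tau2 ->
  (forall i, i \notin S -> row i theta_star = 0) ->
  (forall i, i \notin S -> row i theta_hat = 0) ->
  norm12 theta_star <= Rad ->
  norm12 theta_hat <= Rad ->
  subgrad12 theta_hat z_hat ->
  (forall i, i \in S -> row i (gradbarL Gamma gamma lam rho theta_hat + lam *: z_hat) = 0) ->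
  norminf2 (gradL Gamma gamma theta_star) <= lam / 2 ->
  lam <= alpha2 / (6 * Rad) ->
  16 * Rad ^+ 2 * tau2 ^+ 2 / alpha2 ^+ 2 * ln p%:R <= n%:R ->
  frob (theta_hat - theta_star) <= 1.
Proof.
move=> _ _ _ alpha2P _ tau2_ge0 amen rsc supp_star supp_hat norm_star norm_hat
  sg stat score lam_le n_large.
set D := theta_hat - theta_star.
rewrite leNgt; apply/negP => D_big.
have lam0 := amenable_lam_ge0 amen.
have Rad0 : 0 <= Rad := le_trans (norm12_ge0 theta_star) norm_star.
have normD : norm12 D <= 2 * Rad by apply: le_trans (norm12B _ _) _; lra.
have suppD i : i \notin S -> row i D = 0.
  by move=> iNS; rewrite /D linearB /= supp_star ?supp_hat ?subr0.
have grad_hat := stationary_inner_le Gamma gamma amen sg S D stat suppD.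
have grad_star : `|minner (gradL Gamma gamma theta_star) D| <= lam / 2 * norm12 D.
  exact: le_trans (minner_le_norminf2 _ _) (ler_wpM2r (norm12_ge0 D) score).
have lamRad := lam_rad_le alpha2P Rad0 lam_le.
set s : R := Num.sqrt (ln (p%:R : R) / n%:R).
have tauRad : tau2 * s * Rad <= alpha2 / 4.
  exact: sample_size_le tau2_ge0 alpha2P Rad0 (ln_natr_ge0 p) (ler0n _ n) n_large.
(* Restricted strong curvature in the regime ||D||_F >= 1, against the
   duality bounds on the two gradients. *)
have hatE : theta_star + D = theta_hat by rewrite addrC subrK.
have := (rsc theta_star D).2 (ltW D_big); rewrite hatE minnerB -/s => curv.
have := ler_wpM2l lam0 normD.
have := ler_wpM2l (mulr_ge0 tau2_ge0 (sqrtr_ge0 _) : 0 <= tau2 * s) normD.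
have := ler_norm (minner (gradL Gamma gamma theta_hat) D).
have := ler_norm (- minner (gradL Gamma gamma theta_star) D); rewrite normrN.
have : alpha2 < alpha2 * frob D by rewrite ltr_pMr.
lra.
Qed.
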